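(* In a finite-space SSP game (as in the context), let $\bar\nu\in\Pi_{2,SR}$ be a proper policy of player II. Then the mapping $F_{\bar\nu}$ is a contraction with respect to some weighted sup-norm $\|\cdot\|_\xi$: there exist a positive vector $\xi$ on $R$ and $\beta\in[0,1)$ such that $\|F_{\bar\nu}Q-F_{\bar\nu}Q'\|_\xi\le\beta\|Q-Q'\|_\xi$ for all $Q,Q'\in\mathbb{R}^R$.
   Context: Finite-space game: $S=\{1,\dots,n\}$, $S_o=S\cup\{0\}$, $0$ absorbing cost-free termination state. At $i\in S$ players I and II have finite control sets $U(i),V(i)$; under $(u,v)$ the state moves to $j\in S_o$ w.p. $p_{ij}(u,v)$, with expected one-stage cost $g(i,u,v)$. $\Pi_{1,SR},\Pi_{2,SR}$: stationary randomized policies $\mu=\{\mu(\cdot\mid i)\in\mathcal P(U(i))\}$, $\nu=\{\nu(\cdot\mid i)\in\mathcal P(V(i))\}$. A pair of policies is non-prolonging if the termination state is reached w.p.1 from every initial state. $\nu\in\Pi_{2,SR}$ is proper if $(\mu,\nu)$ is non-prolonging for every $\mu\in\Pi_{1,SR}$. $R=\{(i,u,v):i\in S,u\in U(i),v\in V(i)\}$. For $\bar\nu\in\Pi_{2,SR}$ write $\bar\nu_j=\bar\nu(\cdot\mid j)$ and define $F_{\bar\nu}:\mathbb{R}^R\to\mathbb{R}^R$ by $(F_{\bar\nu}Q)(i,u,v)=g(i,u,v)+\sum_{j\in S}p_{ij}(u,v)\min_{\tilde u\in U(j)}\sum_{\tilde v\in V(j)}\bar\nu_j(\tilde v)Q(j,\tilde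 u,\tilde v)$. For a positive vector $\xi$ on $R$, $\|Q\|_\xi=\max_{(i,u,v)\in R}|Q(i,u,v)|/\xi(i,u,v)$. *)

From mathcomp Require Import all_boot all_order all_algebra.
Set Implicit Arguments. Unset Strict Implicit. Unset Printing Implicit Defensive.
Import Order.TTheory GRing.Theory Num.Theory.
Local Open Scope ring_scope.

(* Model of the finite-space SSP game:
   - states S = 'I_n, the termination state 0 is represented by [None] in
     [option 'I_n] (so S_o = option 'I_n);
   - the control sets U(i), V(i) are the (nonempty) subsets [A i], [B i] of
     fixed finite types [U], [V];
   - [p i u v o] = p_{i o}(u,v), [g i u v] = g(i,u,v);
   - vectors on R = {(i,u,v) | u \in A i, v \in B i} are functions
     'I_n -> U -> V -> K (values outside R are irrelevant). *)

Section Game.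
Variables (K : realFieldType) (n : nat) (U V : finType).
Variables (A : 'I_n -> {set U}) (B : 'I_n -> {set V}).

Definition valid_game (p : 'I_n -> U -> V -> option 'I_n -> K) : Prop :=
  (forall i, A i != set0) /\ (forall i, B i != set0) /\
  (forall i u v, u \in A i -> v \in B i ->
     (forall o, 0 <= p i u v o) /\ \sum_(o : option 'I_n) p i u v o = 1).

Definition policy1 (mu : 'I_n -> U -> K) : Prop :=
  forall i, (forall u, 0 <= mu i u) /\ (forall u, u \notin A i -> mu i u = 0)
            /\ \sum_(u in A i) mu i u = 1.
Definition policy2 (nu : 'I_n -> V -> K) : Prop :=
  forall i, (forall v, 0 <= nu i v) /\ (forall v, v \notin B i -> nu i v = 0)
            /\ \sum_(v in B i) nu i v = 1.

Definition trans (p : 'I_n -> U -> V -> option 'I_n -> K)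
  (mu : 'I_n -> U -> K) (nu : 'I_n -> V -> K) (i j : 'I_n) : K :=
  \sum_(u in A i) \sum_(v in B i) mu i u * nu i v * p i u v (Some j).

(* Probability that the chain started at i has not reached the termination
   state 0 after k steps (0 is absorbing, so this is P(x_k <> 0 | x_0 = i)). *)
Fixpoint not_terminated (p : 'I_n -> U -> V -> option 'I_n -> K)
  (mu : 'I_n -> U -> K) (nu : 'I_n -> V -> K) (k : nat) (i : 'I_n) : K :=
  match k with
  | 0 => 1
  | k'.+1 => \sum_(j : 'I_n) trans p mu nu i j * not_terminated p mu nu k' j
  end.

Definition non_prolonging p mu nu : Prop :=
  forall i (eps : K), 0 < eps ->
    exists N : nat, forall k, (N <= k)%N -> not_terminated p mu nu k i < eps.

Definition proper2 p (nu : 'I_n -> V -> K) : Prop :=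
  forall mu, policy1 mu -> non_prolonging p mu nu.

(* Minimum of f over a finite set (meaningful when the set is nonempty). *)
Definition setmin (T : finType) (X : {set T}) (f : T -> K) : K :=
  match [pick x in X] with
  | Some x0 => \big[Num.min/f x0]_(x in X) f x
  | None => 0
  end.

Definition Fmap p (g : 'I_n -> U -> V -> K) (nu : 'I_n -> V -> K)
  (Q : 'I_n -> U -> V -> K) : 'I_n -> U -> V -> K :=
  fun i u v => g i u v + \sum_(j : 'I_n) p i u v (Some j) *
     setmin (A j) (fun ut => \sum_(vt in B j) nu j vt * Q j ut vt).

Definition positive_on_R (xi : 'I_n -> U -> V -> K) : Prop :=
  forall i u v, u \in A i -> v \in B i -> 0 < xi i u v.

Definition wnorm (xi Q : 'I_n -> U -> V -> K) : K :=
  \big[Num.max/0]_(i : 'I_n) \big[Num.max/0]_(u in A i)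
     \big[Num.max/0]_(v in B i) (`|Q i u v| / xi i u v).

End Game.

(* Fixing the proper policy of player II turns the game into a one-player
   stochastic shortest path problem for player I, with kernel
   [pnu j u o = sum_v nubar(v|j) p_jo(u,v)].  Properness forces a layering of
   the states: peeling off, one layer at a time, the states from which every
   control reaches the termination state or an earlier layer with positive
   probability exhausts all of S, since otherwise player I could stay forever
   in the remaining states.  Exponential weights in the layer depth then give
   a drift inequality [1 + sum_o pnu j u o * w o <= w j], and the vector
   [xi = 1 + E[w(next state)]] makes F a weighted sup-norm contraction with
   modulus [1 - 1 / max xi]. *)
From mathcomp Require Import all_boot all_order all_algebra.
From mathcomp Require Import ring lra zify.
Set Implicit Arguments. Unset Strict Implicit. Unset Printing Implicit Defensive.
Import Order.TTheory GRing.Theory Num.Theory.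
Local Open Scope ring_scope.

Lemma big_option (R : Type) (idx : R) (op : Monoid.com_law idx) (T : finType)
    (F : option T -> R) :
  \big[op/idx]_(o : option T) F o = op (F None) (\big[op/idx]_(x : T) F (Some x)).
Proof.
rewrite (bigD1 None) //=; congr (op _ _).
rewrite (reindex_omap Some id) /=; first by apply: eq_bigl => x; rewrite eqxx.
by case.
Qed.

Section SetMin.
Variables (K : realFieldType) (T : finType) (X : {set T}).

Lemma setmin_le (f : T -> K) y : y \in X -> setmin X f <= f y.
Proof.
move=> Xy; rewrite /setmin; case: pickP => [x0 _|X0]; last by rewrite X0 in Xy.
exact: bigmin_le_cond.
Qed.

Lemma setmin_attained (f : T -> K) :
  X != set0 -> exists2 y, y \in X & setmin X f = f y.
Proof.
case/set0Pn => y0 Xy0; rewrite /setmin; case: pickP => [x0 Xx0|X0];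
  last by rewrite X0 in Xy0.
elim/big_ind: _ => [|a b [ya Xa ->] [yb Xb ->]|y Xy]; first by exists x0.
  by case: (leP (f ya) (f yb)) => _; [exists ya|exists yb].
by exists y.
Qed.

Lemma ler_norm_setminB (f g : T -> K) e :
  X != set0 -> (forall x, x \in X -> `|f x - g x| <= e) ->
  `|setmin X f - setmin X g| <= e.
Proof.
move=> X0 fg; rewrite ler_norml; apply/andP; split.
  case: (setmin_attained f X0) => y Xy ->.
  apply: le_trans (_ : f y - g y <= _).
    by have := fg y Xy; rewrite ler_norml => /andP[].
  by rewrite lerD2l lerN2 setmin_le.
case: (setmin_attained g X0) => y Xy ->.
apply: le_trans (_ : f y - g y <= _); first by rewrite lerD2r setmin_le.
by have := fg y Xy; rewrite ler_norml => /andP[].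
Qed.

End SetMin.

Section WeightedNorm.
Variables (K : realFieldType) (n : nat) (U V : finType).
Variables (A : 'I_n -> {set U}) (B : 'I_n -> {set V}) (xi : 'I_n -> U -> V -> K).
Hypothesis xi_gt0 : positive_on_R A B xi.

Lemma wnorm_ge0 Z : 0 <= wnorm A B xi Z.
Proof. exact: bigmax_ge_id. Qed.

Lemma ler_norm_wnorm Z i u v : u \in A i -> v \in B i ->
  `|Z i u v| <= wnorm A B xi Z * xi i u v.
Proof.
move=> Au Bv; rewrite -ler_pdivrMr ?xi_gt0 //.
apply: le_trans (le_bigmax _ _ i); apply: le_trans (le_bigmax_cond _ _ Au).
exact: (le_bigmax_cond _ (fun v => `|Z i u v| / xi i u v) Bv).
Qed.

Lemma wnorm_le Z c : 0 <= c ->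
  (forall i u v, u \in A i -> v \in B i -> `|Z i u v| <= c * xi i u v) ->
  wnorm A B xi Z <= c.
Proof.
move=> c0 Zc; apply: bigmax_le => // i _; apply: bigmax_le => // u Au.
by apply: bigmax_le => // v Bv; rewrite ler_pdivrMr ?xi_gt0 ?Zc.
Qed.

(* [d * (xi - 1) <= (1 - 1/M) * d * xi] precisely because [xi <= M]. *)
Lemma wnorm_contraction (F : ('I_n -> U -> V -> K) -> 'I_n -> U -> V -> K) M :
  1 <= M -> (forall i u v, u \in A i -> v \in B i -> xi i u v <= M) ->
  (forall Q Q' d, 0 <= d ->
     (forall i u v, u \in A i -> v \in B i ->
        `|Q i u v - Q' i u v| <= d * xi i u v) ->
     forall i u v, u \in A i -> v \in B i ->
       `|F Q i u v - F Q' i u v| <= d * (xi i u v - 1)) ->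
  forall Q Q',
    wnorm A B xi (fun i u v => F Q i u v - F Q' i u v)
    <= (1 - M^-1) * wnorm A B xi (fun i u v => Q i u v - Q' i u v).
Proof.
move=> M1 xiM FL Q Q'; set d := wnorm A B xi (fun i u v => Q i u v - Q' i u v).
have M0 : 0 < M by apply: lt_le_trans M1.
apply: wnorm_le => [|i u v Au Bv].
  by rewrite mulr_ge0 ?wnorm_ge0 // subr_ge0 invf_le1.
apply: le_trans (FL Q Q' d (wnorm_ge0 _) _ i u v Au Bv) _.
  by move=> i' u' v'; exact: ler_norm_wnorm.
have xiM1 : d * (xi i u v / M) <= d.
  by rewrite ler_piMr ?wnorm_ge0 // ler_pdivrMr // mul1r xiM.
have -> : (1 - M^-1) * d * xi i u v = d * xi i u v - d * (xi i u v / M) by ring.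
lra.
Qed.

End WeightedNorm.

Section ProperPolicy.
Variables (K : realFieldType) (n : nat) (U V : finType).
Variables (A : 'I_n -> {set U}) (B : 'I_n -> {set V}).
Variables (p : 'I_n -> U -> V -> option 'I_n -> K) (nu : 'I_n -> V -> K).
Hypothesis p_valid : valid_game A B p.
Hypothesis nu_policy : policy2 B nu.

Lemma A_neq0 i : A i != set0.
Proof. by case: p_valid. Qed.

Lemma p_ge0 i u v o : u \in A i -> v \in B i -> 0 <= p i u v o.
Proof. by move=> Au Bv; case: p_valid => _ [_ /(_ i u v Au Bv) [->]]. Qed.

Lemma p_sum1 i u v : u \in A i -> v \in B i -> \sum_o p i u v o = 1.
Proof. by move=> Au Bv; case: p_valid => _ [_ /(_ i u v Au Bv) []]. Qed.

Lemma nu_ge0 j v : 0 <= nu j v.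
Proof. by case: (nu_policy j). Qed.

Lemma nu_sum1 j : \sum_(v in B j) nu j v = 1.
Proof. by case: (nu_policy j) => _ []. Qed.

Definition pnu j u o : K := \sum_(v in B j) nu j v * p j u v o.

Lemma pnu_ge0 j u o : u \in A j -> 0 <= pnu j u o.
Proof. by move=> Au; apply: sumr_ge0 => v Bv; rewrite mulr_ge0 ?nu_ge0 ?p_ge0. Qed.

Lemma pnu_sum1 j u : u \in A j -> \sum_o pnu j u o = 1.
Proof.
move=> Au; rewrite exchange_big /= -(nu_sum1 j).
by apply: eq_bigr => v Bv; rewrite -mulr_sumr p_sum1 ?mulr1.
Qed.

Definition escapes (X : {set 'I_n}) j u :=
  (0 < pnu j u None) || [exists l in X, 0 < pnu j u (Some l)].

Definition step (X : {set 'I_n}) : {set 'I_n} :=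
  X :|: [set j | [forall u in A j, escapes X j u]].

Lemma step_mono : {homo step : X Y / X \subset Y}.
Proof.
move=> X Y sXY; apply/subsetP => j; rewrite !inE => /orP[Xj|/forall_inP esc].
  by rewrite (subsetP sXY).
apply/orP; right; apply/forall_inP => u Au; rewrite /escapes.
case/orP: (esc u Au) => [->//|].
case/exists_inP => l Xl pos; apply/orP; right; apply/exists_inP.
by exists l; rewrite ?(subsetP sXY).
Qed.

Lemma notin_step X j : j \notin step X ->
  exists2 u, u \in A j &
    pnu j u None = 0 /\ forall l, l \in X -> pnu j u (Some l) = 0.
Proof.
rewrite !inE negb_or => /andP[_ /forall_inPn [u Au]].
rewrite negb_or -leNgt => /andP[le0 /exists_inPn lt0]; exists u => //.
split; first by apply/le_anti; rewrite le0 pnu_ge0.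
by move=> l Xl; apply/le_anti; rewrite pnu_ge0 // andbT leNgt lt0.
Qed.

Definition det_policy (ch : 'I_n -> U) j u : K := (u == ch j)%:R.

Lemma det_policyP ch : (forall j, ch j \in A j) -> policy1 A (det_policy ch).
Proof.
move=> chA i; split=> [u|]; first by rewrite ler0n.
split=> [u|]; first by rewrite /det_policy; case: eqP => // ->; rewrite chA.
rewrite (bigD1 (ch i)) //= /det_policy eqxx big1 ?addr0 // => u /andP[_].
by move/negPf ->.
Qed.

Lemma trans_det_policy ch j l : ch j \in A j ->
  trans A B p (det_policy ch) nu j l = pnu j (ch j) (Some l).
Proof.
move=> chA; rewrite /trans (bigD1 (ch j)) //= [X in _ + X]big1 ?addr0.
  by apply: eq_bigr => v _; rewrite /det_policy eqxx mul1r.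
move=> u /andP[_ /negPf neq]; apply: big1 => v _.
by rewrite /det_policy neq !mul0r.
Qed.

Lemma not_terminated_trapped ch (C : {set 'I_n}) :
  (forall j, ch j \in A j) ->
  (forall j, j \in C ->
     pnu j (ch j) None = 0 /\ forall l, l \notin C -> pnu j (ch j) (Some l) = 0) ->
  forall k j, j \in C -> not_terminated A B p (det_policy ch) nu k j = 1.
Proof.
move=> chA trapped; elim=> [//|k IHk] j Cj /=.
have [stay leave] := trapped j Cj.
have one := pnu_sum1 (chA j); rewrite big_option /= stay add0r in one.
rewrite -one; apply: eq_bigr => l _; rewrite trans_det_policy //.
by case: (boolP (l \in C)) => Cl; [rewrite IHk ?mulr1 | rewrite leave ?mul0r].
Qed.

Hypothesis nu_proper : proper2 A B p nu.

(* A state outside the least fixed point of [step] is trapped, under a suitable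
   deterministic policy of player I, in the complement of that fixed point. *)
Lemma in_fixset_step j : j \in fixset step.
Proof.
set S := fixset step.
have trap j' : exists u, u \in A j' /\ (j' \in ~: S ->
    pnu j' u None = 0 /\ forall l, l \notin ~: S -> pnu j' u (Some l) = 0).
  case: (boolP (j' \in S)) => Sj'.
    by case/set0Pn: (A_neq0 j') => u Au; exists u; rewrite inE Sj'.
  have: j' \notin step S by rewrite fixsetK //; exact: step_mono.
  case/notin_step => u Au [stay leave]; exists u; split=> // _.
  by split=> // l; rewrite inE negbK; exact: leave.
case/fin_all_exists: trap => ch chP.
have chA j' : ch j' \in A j' by case: (chP j').
apply/negPn/negP => Sj.
have nt1 := not_terminated_trapped chA (fun j' => (chP j').2).
case: (nu_proper (det_policyP chA) j ltr01) => N /(_ N (leqnn N)).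
by rewrite nt1 ?ltxx // inE.
Qed.

Definition depth (o : option 'I_n) : nat :=
  if o is Some j then fix_order step j else 0.

Lemma depth_gt0 j : (0 < depth (Some j))%N.
Proof. by rewrite /= fix_order_gt0 in_fixset_step. Qed.

Lemma depth_le o : (depth o <= n)%N.
Proof. by case: o => //= j; have := fix_order_le_max step j; rewrite card_ord. Qed.

Lemma depth_descent j u : u \in A j ->
  exists2 o, (depth o < depth (Some j))%N & 0 < pnu j u o.
Proof.
move=> Au; rewrite /=; set k := (fix_order step j).-1.
have dj : fix_order step j = k.+1 by rewrite prednK //; exact: depth_gt0.
have jin := in_iter_fix_orderE step j; rewrite in_fixset_step dj /= in jin.
have jout : j \notin iter k step set0 by apply: (notin_iter step_mono); rewrite dj.
rewrite dj; move: jin; rewrite {1}/step !inE.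
case/orP => [jin|/forall_inP /(_ u Au) /orP[|/exists_inP [l lin pos]]].
- by rewrite jin in jout.
- by exists None.
by exists (Some l); rewrite //= ltnS (fix_order_small step_mono lin).
Qed.

Definition descent j u : K :=
  \sum_(o | (depth o < depth (Some j))%N) pnu j u o.

Lemma descent_gt0 j u : u \in A j -> 0 < descent j u.
Proof.
move=> Au; case: (depth_descent Au) => o lt_o pos.
rewrite /descent (bigD1 o) //= ltr_wpDr //.
by apply: sumr_ge0 => o' _; exact: pnu_ge0.
Qed.

Definition delta : K := \big[Num.min/1]_j \big[Num.min/1]_(u in A j) descent j u.

Lemma delta_gt0 : 0 < delta.
Proof. by apply: lt_bigmin => // j _; apply: lt_bigmin => // u; exact: descent_gt0. Qed.

Lemma delta_le_descent j u : u \in A j -> delta <= descent j u.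
Proof. by move=> Au; apply: (bigmin_inf j) => //; exact: bigmin_le_cond. Qed.

Definition ratio : K := 2 / delta.

Lemma ratio_ge1 : 1 <= ratio.
Proof.
rewrite /ratio ler_pdivlMr ?delta_gt0 // mul1r.
by apply: le_trans (bigmin_le_id _ _ _ _) _; rewrite ler1n.
Qed.

Lemma ratio_ge0 : 0 <= ratio.
Proof. exact: le_trans ler01 ratio_ge1. Qed.

Lemma delta_ratio : delta * ratio = 2.
Proof. by rewrite /ratio mulrC divfK // gt_eqF // delta_gt0. Qed.

Definition weight (o : option 'I_n) : K := ratio ^+ n - ratio ^+ (n - depth o).

Lemma weight_ge0 o : 0 <= weight o.
Proof. by rewrite subr_ge0 ler_weXn2l ?ratio_ge1 ?leq_subr. Qed.

Lemma weight_None : weight None = 0.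
Proof. by rewrite /weight subn0 subrr. Qed.

Lemma weight_le o : weight o <= ratio ^+ n.
Proof. by rewrite lerBlDr lerDl exprn_ge0 // ratio_ge0. Qed.

(* One step of player I from [j] loses at least a unit of weight: with
   probability at least [delta] the chain drops a layer, which multiplies
   [ratio ^+ (n - depth)] by at least [ratio = 2 / delta]. *)
Lemma weight_drift j u : u \in A j ->
  1 + \sum_o pnu j u o * weight o <= weight (Some j).
Proof.
move=> Au; set e := fun o => ratio ^+ (n - depth o).
have dj := depth_le (Some j).
have e_ge0 o : 0 <= e o by rewrite exprn_ge0 // ratio_ge0.
have mean_e : \sum_o pnu j u o * weight o = ratio ^+ n - \sum_o pnu j u o * e o.
  under eq_bigr => o _ do rewrite mulrBr.
  by rewrite sumrB -mulr_suml pnu_sum1 // mul1r.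
have lower : descent j u * (ratio * e (Some j)) <= \sum_o pnu j u o * e o.
  rewrite mulr_suml [X in _ <= X](bigID (fun o => depth o < depth (Some j))%N) /=.
  rewrite -[X in X <= _]addr0 lerD //; last first.
    by apply: sumr_ge0 => o _; rewrite mulr_ge0 ?pnu_ge0.
  apply: ler_sum => o lt_o; rewrite ler_wpM2l ?pnu_ge0 // /e -exprS.
  by rewrite ler_weXn2l ?ratio_ge1 //; move: lt_o dj => /=; lia.
have drop : 2 * e (Some j) <= descent j u * (ratio * e (Some j)).
  rewrite -delta_ratio -mulrA ler_wpM2r ?delta_le_descent //.
  by rewrite mulr_ge0 // ratio_ge0.
have e1 : 1 <= e (Some j) by exact: exprn_ege1 ratio_ge1.
rewrite mean_e /weight -/(e (Some j)); lra.
Qed.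

Definition xi i u v : K := 1 + \sum_o p i u v o * weight o.

Lemma xi_ge1 i u v : u \in A i -> v \in B i -> 1 <= xi i u v.
Proof.
move=> Au Bv; rewrite lerDl; apply: sumr_ge0 => o _.
by rewrite mulr_ge0 ?p_ge0 ?weight_ge0.
Qed.

Lemma xi_le i u v : u \in A i -> v \in B i -> xi i u v <= 1 + ratio ^+ n.
Proof.
move=> Au Bv; rewrite lerD2l -[X in _ <= X]mul1r -(p_sum1 Au Bv) mulr_suml.
by apply: ler_sum => o _; rewrite ler_wpM2l ?p_ge0 ?weight_le.
Qed.

Lemma nu_mean_xi j u :
  \sum_(v in B j) nu j v * xi j u v = 1 + \sum_o pnu j u o * weight o.
Proof.
under eq_bigr => v _ do rewrite mulrDr mulr1 mulr_sumr.
rewrite big_split /= nu_sum1 exchange_big /=; congr (1 + _).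
by apply: eq_bigr => o _; rewrite mulr_suml; apply: eq_bigr => v _; rewrite mulrA.
Qed.

Lemma norm_nu_mean_le (Z : V -> K) d j u : 0 <= d -> u \in A j ->
  (forall v, v \in B j -> `|Z v| <= d * xi j u v) ->
  `|\sum_(v in B j) nu j v * Z v| <= d * weight (Some j).
Proof.
move=> d0 Au Zd; apply: le_trans (ler_norm_sum _ _ _) _.
apply: le_trans (_ : \sum_(v in B j) nu j v * (d * xi j u v) <= _).
  apply: ler_sum => v Bv; rewrite normrM ger0_norm ?nu_ge0 //.
  by rewrite ler_wpM2l ?nu_ge0 ?Zd.
under eq_bigr => v _ do rewrite mulrCA.
by rewrite -mulr_sumr nu_mean_xi ler_wpM2l ?weight_drift.
Qed.

Lemma Fmap_distance_le g Q Q' d : 0 <= d ->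
  (forall i u v, u \in A i -> v \in B i -> `|Q i u v - Q' i u v| <= d * xi i u v) ->
  forall i u v, u \in A i -> v \in B i ->
    `|Fmap A B p g nu Q i u v - Fmap A B p g nu Q' i u v| <= d * (xi i u v - 1).
Proof.
move=> d0 QQ' i u v Au Bv.
rewrite /Fmap opprD addrACA subrr add0r -sumrB.
apply: le_trans (ler_norm_sum _ _ _) _.
rewrite /xi [1 + _]addrC addrK big_option /= weight_None mulr0 add0r mulr_sumr.
apply: ler_sum => j _; rewrite -mulrBr normrM ger0_norm ?p_ge0 //.
rewrite mulrCA ler_wpM2l ?p_ge0 //; apply: ler_norm_setminB (A_neq0 j) _ => ut Aut.
rewrite -sumrB; under eq_bigr => vt _ do rewrite -mulrBr.
exact: (norm_nu_mean_le d0 Aut (fun vt Bvt => QQ' j ut vt Aut Bvt)).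
Qed.

End ProperPolicy.

Theorem lemma4p8 (K : realFieldType) (n : nat) (U V : finType)
  (A : 'I_n -> {set U}) (B : 'I_n -> {set V})
  (p : 'I_n -> U -> V -> option 'I_n -> K) (g : 'I_n -> U -> V -> K)
  (nubar : 'I_n -> V -> K) :
  valid_game A B p ->
  policy2 B nubar ->
  proper2 A B p nubar ->
  exists (xi : 'I_n -> U -> V -> K) (beta : K),
    positive_on_R A B xi /\ 0 <= beta /\ beta < 1 /\
    forall Q Q' : 'I_n -> U -> V -> K,
      wnorm A B xi (fun i u v => Fmap A B p g nubar Q i u v - Fmap A B p g nubar Q' i u v)
      <= beta * wnorm A B xi (fun i u v => Q i u v - Q' i u v).
Proof.
move=> p_valid nu_policy nu_proper.
have xi_gt0 : positive_on_R A B (xi A B p nubar).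
  move=> i u v Au Bv; apply: lt_le_trans ltr01 _.
  exact: xi_ge1 p_valid nu_policy nu_proper _ _ _ Au Bv.
have xiM := xi_le p_valid nu_policy nu_proper.
set M := 1 + ratio A B p nubar ^+ n in xiM.
have M1 : 1 <= M.
  by rewrite lerDl exprn_ge0 // (ratio_ge0 p_valid nu_policy nu_proper).
have M0 : 0 < M by apply: lt_le_trans ltr01 M1.
exists (xi A B p nubar), (1 - M^-1); split=> //.
split; first by rewrite subr_ge0 invf_le1.
split; first by rewrite ltrBlDr ltrDl invr_gt0.
apply: (wnorm_contraction xi_gt0 M1 xiM) => Q Q' d.
exact: Fmap_distance_le.
Qed.
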